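(* For the $2$-state GM+I model on a binary 4-taxon tree $T$, numerical parameters are generically locally identifiable: there is a proper algebraic variety $Y_T\subsetneq\mathbb C^{13}$ such that for every $\mathbf s\in S_T\setminus Y_T$ there is a neighborhood of $\mathbf s$ on which $\phi_T$ is injective.
   Context: For a binary 4-taxon tree $T$ with edge set $E$ ($|E|=5$), the $2$-state GM+I model has parameters $\mathbf s=(\delta,\pi_I,\pi_{GM},(M_e)_{e\in E})$: $\delta\in[0,1]$, probability vectors $\pi_I,\pi_{GM}\in[0,1]^2$ ($\pi_{GM}$ the distribution at a chosen root $r$), and $2\times 2$ Markov matrices $M_e$ (rows summing to 1) for edges directed away from $r$; these form the stochastic parameter space $S_T\subseteq\mathbb R^{13}$. The joint leaf distribution $P=\phi_T(\mathbf s)$ has entries $p_{i_1i_2i_3i_4}=\delta\,\epsilon(i_1,\dots,i_4)\pi_I(i_1)+(1-\delta)\sum_{(j_v)}\pi_{GM}(j_r)\prod_{e=(u\to w)}M_e(j_u,j_w)$, with $\epsilon=1$ if all indices equal and $0$ otherwise, the sum over all state assignments to vertices extending the leaf states. *)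

From mathcomp Require Import all_boot all_order all_algebra.
From mathcomp Require Import reals.
From mathcomp Require Import complex.
From mathcomp Require mpoly.
Set Implicit Arguments. Unset Strict Implicit. Unset Printing Implicit Defensive.
Import Order.TTheory GRing.Theory Num.Theory.
Local Open Scope ring_scope.

(* Vertices of a binary 4-taxon tree: 'I_6, leaves 0,1,2,3 (= taxa 1..4),
   internal vertices 4 and 5.  The topology is given by a set A of two
   leaves: the leaves of A are adjacent to vertex 4, the others to vertex 5
   (every binary 4-taxon tree arises this way).
   Edges: 'I_5; edge k < 4 is the pendant edge of leaf k, edge 4 is the
   internal edge {4,5}. *)

Definition tree4 := {set 'I_4}.
Definition is_binary_tree4 (A : tree4) : Prop := #|A| = 2%N.

Definition hub (A : tree4) (k : 'I_4) : 'I_6 :=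
  if k \in A then inord 4 else inord 5.

Definition edge_ends (A : tree4) (e : 'I_5) : 'I_6 * 'I_6 :=
  match insub (val e) : option 'I_4 with
  | Some k => (widen_ord (isT : (4 <= 6)%N) k, hub A k)
  | None => (inord 4, inord 5)
  end.

Definition side (A : tree4) (v : 'I_6) : 'I_6 :=
  match insub (val v) : option 'I_4 with
  | Some k => hub A k
  | None => v
  end.

(* edge e directed away from root r: (parent, child) *)
Definition dir_edge (A : tree4) (r : 'I_6) (e : 'I_5) : 'I_6 * 'I_6 :=
  let: (x, y) := edge_ends A e in
  if (val e < 4)%N then
    (* x is a leaf, y its hub: the leaf is the parent iff it is the root *)
    (if r == x then (x, y) else (y, x))
  else
    (* internal edge (4,5): 4 is the parent iff the root is on 4's side *)
    (if side A r == x then (x, y) else (y, x)).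

(* Coordinates of the parameter vector s in R^13 (free coordinates):
     s 0           = delta
     s 1           = pi_I(0)       (pi_I(1)  = 1 - s 1)
     s 2           = pi_GM(0)      (pi_GM(1) = 1 - s 2)
     s (3 + 2e)    = M_e(0,0)      (M_e(0,1) = 1 - s (3+2e))
     s (4 + 2e)    = M_e(1,0)      (M_e(1,1) = 1 - s (4+2e))   for e : 'I_5. *)
Section Model.
Variable R : realType.
Implicit Types (s : 'I_13 -> R).

Definition prob2 (a : R) (i : 'I_2) : R := if val i == 0%N then a else 1 - a.

Definition delta s : R := s (inord 0).
Definition piI s (i : 'I_2) : R := prob2 (s (inord 1)) i.
Definition piGM s (i : 'I_2) : R := prob2 (s (inord 2)) i.
Definition Medge s (e : 'I_5) (i j : 'I_2) : R :=
  prob2 (s (inord (3 + 2 * val e + val i))) j.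

Definition stoch_params s : Prop := forall k, 0 <= s k <= 1.

Definition vstate (lf : 'I_4 -> 'I_2) (a b : 'I_2) (v : 'I_6) : 'I_2 :=
  match insub (val v) : option 'I_4 with
  | Some k => lf k
  | None => if val v == 4%N then a else b
  end.

Definition phiT (A : tree4) (r : 'I_6) s (lf : 'I_4 -> 'I_2) : R :=
  delta s * (if [forall k, lf k == lf ord0] then 1 else 0) * piI s (lf ord0)
  + (1 - delta s) *
    \sum_(a : 'I_2) \sum_(b : 'I_2)
      (piGM s (vstate lf a b r) *
       \prod_(e : 'I_5)
         Medge s e (vstate lf a b (dir_edge A r e).1)
                   (vstate lf a b (dir_edge A r e).2)).

Definition locally_injective (A : tree4) (r : 'I_6) s : Prop :=
  exists2 eps : R, 0 < eps &
    forall s1 s2 : 'I_13 -> R,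
      stoch_params s1 -> stoch_params s2 ->
      (forall k, `|s1 k - s k| < eps) -> (forall k, `|s2 k - s k| < eps) ->
      (forall lf : {ffun 'I_4 -> 'I_2}, phiT A r s1 lf = phiT A r s2 lf) ->
      s1 = s2.

Definition variety (Y : ('I_13 -> R[i]) -> Prop) : Prop :=
  exists F : mpoly.mpoly 13 R[i] -> Prop,
    forall z, Y z <-> (forall f, F f -> mpoly.meval z f = 0).

Definition proper_variety (Y : ('I_13 -> R[i]) -> Prop) : Prop :=
  variety Y /\ exists z, ~ Y z.

Definition realC s : 'I_13 -> R[i] := fun k => (s k)%:C%C.

End Model.

From mathcomp Require Import all_boot all_order all_algebra.
From mathcomp Require Import reals complex.
From mathcomp Require Import mpoly ring lra zify.
From Stdlib Require Import FunctionalExtensionality.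
Set Implicit Arguments. Unset Strict Implicit. Unset Printing Implicit Defensive.
Import Order.TTheory GRing.Theory Num.Theory.
Local Open Scope ring_scope.

(* For fixed leaves, phi_T is affine in each of its 13 coordinates separately.
   Hence, for the 13 leaf patterns of [site_code], the matrix J(s) of the
   differences phi(s[k:=1]) - phi(s[k:=0]) is the Jacobian of s |-> phi(s),
   its determinant D is a polynomial in s, and changing one coordinate at a
   time gives phi(x) - phi(y) = M(x,y) (x - y), where the columns of M(x,y) are
   columns of J at points between x and y.  Take Y = {D = 0}.  It is a proper
   variety because D does not vanish at an integer point, as certified by
   inverting J modulo 7 for each of the six trees and six roots.  If D(s) <> 0,
   then by continuity M(x,y) is invertible for x, y close to s, so that
   phi(x) = phi(y) forces x = y. *)

(** * Multi-affine maps *)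

Section AffineFunctions.
Variable K : comNzRingType.
Implicit Types f g : K -> K.

Definition constfun f := forall t, f t = f 0.
Definition affine f := forall t, f t = f 0 + t * (f 1 - f 0).

Lemma constfun_cst c : constfun (fun=> c).
Proof. by []. Qed.

Lemma constfun1B f : constfun f -> constfun (fun t => 1 - f t).
Proof. by move=> cf t; rewrite cf. Qed.

Lemma affine1B f : affine f -> affine (fun t => 1 - f t).
Proof. by move=> af t; rewrite af; ring. Qed.

Lemma constfunM f g : constfun f -> constfun g -> constfun (fun t => f t * g t).
Proof. by move=> cf cg t; rewrite cf cg. Qed.

Lemma affineD f g : affine f -> affine g -> affine (fun t => f t + g t).
Proof. by move=> af ag t; rewrite af ag; ring. Qed.

Lemma affineMr f g : affine f -> constfun g -> affine (fun t => f t * g t).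
Proof. by move=> af cg t; rewrite af cg (cg 1); ring. Qed.

Lemma affineMl f g : constfun f -> affine g -> affine (fun t => f t * g t).
Proof. by move=> cf ag t; rewrite cf (cf 1) ag; ring. Qed.

Lemma constfun_sum (I : finType) (F : I -> K -> K) :
  (forall i, constfun (F i)) -> constfun (fun t => \sum_i F i t).
Proof. by move=> cF t; apply: eq_bigr => i _; rewrite cF. Qed.

Lemma affine_sum (I : finType) (F : I -> K -> K) :
  (forall i, affine (F i)) -> affine (fun t => \sum_i F i t).
Proof.
by move=> aF t; rewrite (eq_bigr _ (fun i _ => aF i t)) big_split -mulr_sumr sumrB.
Qed.

Lemma constfun_prod (I : finType) (F : I -> K -> K) :
  (forall i, constfun (F i)) -> constfun (fun t => \prod_i F i t).
Proof. by move=> cF t; apply: eq_bigr => i _; rewrite cF. Qed.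

Lemma affine_prod (I : finType) (F : I -> K -> K) i0 :
  (forall i, i != i0 -> constfun (F i)) -> affine (F i0) -> affine (fun t => \prod_i F i t).
Proof.
move=> cF aF0 t.
have prodE u : \prod_i F i u = F i0 u * \prod_(i | i != i0) F i 0.
  by rewrite (bigD1 i0) //=; congr (_ * _); apply: eq_bigr => i /cF ->.
by rewrite !prodE aF0; ring.
Qed.

End AffineFunctions.

Section MultiAffine.
Variables (K : comNzRingType) (n : nat).
Implicit Types (F : ('I_n -> K) -> K) (x y z : 'I_n -> K).

Definition multiaffine F := forall z k, affine (fun t => F [eta z with k |-> t]).

(* For a multi-affine [F] this is the partial derivative of [F] along [k]. *)
Definition partial_diff F z k := F [eta z with k |-> 1] - F [eta z with k |-> 0].

Definition jacobian (F : 'I_n -> ('I_n -> K) -> K) z : 'M[K]_n :=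
  \matrix_(i, k) partial_diff (F i) z k.

Definition splice x y (m : nat) : 'I_n -> K := fun j => if (j < m)%N then y j else x j.

Definition secant (F : 'I_n -> ('I_n -> K) -> K) x y : 'M[K]_n :=
  \matrix_(i, k) partial_diff (F i) (splice x y k) k.

Lemma multiaffine_diff F z k a b : multiaffine F ->
  F [eta z with k |-> a] - F [eta z with k |-> b] = (a - b) * partial_diff F z k.
Proof.
move=> /(_ z k) aF; have /= Fa := aF a; have /= Fb := aF b.
by rewrite Fa Fb /partial_diff; ring.
Qed.

Lemma multiaffine_telescope F x y : multiaffine F ->
  F x - F y = \sum_(k < n) (x k - y k) * partial_diff F (splice x y k) k.
Proof.
move=> aF; pose u m := F (splice x y m).
have -> : F x = u 0%N by congr F; apply: functional_extensionality => j; rewrite /splice ltn0.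
have -> : F y = u n by congr F; apply: functional_extensionality => j; rewrite /splice ltn_ord.
rewrite -opprB -(telescope_sumr u (leq0n n)) big_mkord -sumrN; apply: eq_bigr => k _.
have Ex : splice x y k = [eta splice x y k with k |-> x k].
  by apply: functional_extensionality => j /=; case: eqP => // ->; rewrite /splice ltnn.
have Ey : splice x y k.+1 = [eta splice x y k with k |-> y k].
  apply: functional_extensionality => j /=; rewrite /splice ltnS leq_eqVlt.
  have [->|jk] := eqVneq j k; first by rewrite !eqxx.
  by rewrite (negbTE jk : (val j == val k) = false).
by rewrite opprB /u Ey {1}Ex multiaffine_diff.
Qed.

Lemma secant_mul (F : 'I_n -> ('I_n -> K) -> K) x y : (forall i, multiaffine (F i)) ->
  secant F x y *m \col_k (x k - y k) = \col_i (F i x - F i y).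
Proof.
move=> aF; apply/matrixP => i j; rewrite !mxE multiaffine_telescope //.
by apply: eq_bigr => k _; rewrite !mxE mulrC.
Qed.

Lemma secant_diag (F : 'I_n -> ('I_n -> K) -> K) z : secant F z z = jacobian F z.
Proof.
apply/matrixP => i k; rewrite !mxE; congr partial_diff.
by apply: functional_extensionality => j; rewrite /splice if_same.
Qed.

End MultiAffine.

(** * Local injectivity *)

Section Limits.
Variables (R : realType) (X : Type) (ball : R -> X -> Prop).
Hypothesis ball_mono : forall d d' x, d <= d' -> ball d x -> ball d' x.

Definition tends_to (f : X -> R) (c : R) :=
  forall e, 0 < e -> exists2 d, 0 < d & forall x, ball d x -> `|f x - c| < e.

Lemma eq_tends_to f g c : f =1 g -> tends_to f c -> tends_to g c.
Proof. by move=> fg fc e /fc[d d_gt0 fd]; exists d => // x /fd; rewrite fg. Qed.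

Lemma tends_to_cst c : tends_to (fun=> c) c.
Proof. by move=> e e_gt0; exists 1 => // x _; rewrite subrr normr0. Qed.

Lemma ball_meet d1 d2 : 0 < d1 -> 0 < d2 ->
  exists2 d, 0 < d & forall x, ball d x -> ball d1 x /\ ball d2 x.
Proof.
move=> d1_gt0 d2_gt0; exists (Num.min d1 d2); first by rewrite lt_min d1_gt0.
by move=> x bx; split; apply: ball_mono bx; rewrite ge_min lexx ?orbT.
Qed.

Lemma tends_toD f g a b : tends_to f a -> tends_to g b ->
  tends_to (fun x => f x + g x) (a + b).
Proof.
move=> fa gb e e_gt0; have e2_gt0 : 0 < e / 2 by rewrite divr_gt0.
have [d1 d1_gt0 fd] := fa _ e2_gt0; have [d2 d2_gt0 gd] := gb _ e2_gt0.
have [d d_gt0 bd] := ball_meet d1_gt0 d2_gt0.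
exists d => // x /bd[/fd fx /gd gx].
rewrite opprD addrACA (le_lt_trans (ler_normD _ _)) // [e]splitr ltrD //.
Qed.

Lemma tends_toN f a : tends_to f a -> tends_to (fun x => - f x) (- a).
Proof. by move=> fa e /fa[d d_gt0 fd]; exists d => // x /fd; rewrite -opprD normrN. Qed.

Lemma tends_toM f g a b : tends_to f a -> tends_to g b ->
  tends_to (fun x => f x * g x) (a * b).
Proof.
move=> fa gb e e_gt0.
pose C := 1 + `|a| + `|b|.
have C_gt0 : 0 < C by rewrite /C; have := normr_ge0 a; have := normr_ge0 b; lra.
pose eta := Num.min 1 (e / C).
have eta_gt0 : 0 < eta by rewrite lt_min ltr01 divr_gt0.
have eta_le1 : eta <= 1 by rewrite ge_min lexx.
have etaC : eta * C <= e by rewrite -ler_pdivlMr // ge_min lexx orbT.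
have [d1 d1_gt0 fd] := fa _ eta_gt0; have [d2 d2_gt0 gd] := gb _ eta_gt0.
have [d d_gt0 bd] := ball_meet d1_gt0 d2_gt0.
exists d => // x /bd[/fd fx /gd gx].
have : `|f x * g x - a * b| <= `|f x - a| * `|g x - b| + `|a| * `|g x - b| + `|b| * `|f x - a|.
  have -> : f x * g x - a * b = (f x - a) * (g x - b) + a * (g x - b) + b * (f x - a) by ring.
  by rewrite -!normrM (le_trans (ler_normD _ _)) // lerD2r ler_normD.
have := normr_ge0 (f x - a); have := normr_ge0 (g x - b).
have := normr_ge0 a; have := normr_ge0 b; rewrite /C in etaC; nra.
Qed.

Lemma tends_to_sum (I : Type) (r : seq I) (P : pred I) (F : I -> X -> R) (c : I -> R) :
  (forall i, tends_to (F i) (c i)) ->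
  tends_to (fun x => \sum_(i <- r | P i) F i x) (\sum_(i <- r | P i) c i).
Proof.
move=> Fc; elim: r => [|i r IHr].
  by rewrite big_nil; apply: eq_tends_to (tends_to_cst 0) => x; rewrite big_nil.
rewrite big_cons; case: ifP => Pi.
  by apply: eq_tends_to (tends_toD (Fc i) IHr) => x; rewrite big_cons Pi.
by apply: eq_tends_to IHr => x; rewrite big_cons Pi.
Qed.

Lemma tends_to_prod (I : Type) (r : seq I) (P : pred I) (F : I -> X -> R) (c : I -> R) :
  (forall i, tends_to (F i) (c i)) ->
  tends_to (fun x => \prod_(i <- r | P i) F i x) (\prod_(i <- r | P i) c i).
Proof.
move=> Fc; elim: r => [|i r IHr].
  by rewrite big_nil; apply: eq_tends_to (tends_to_cst 1) => x; rewrite big_nil.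
rewrite big_cons; case: ifP => Pi.
  by apply: eq_tends_to (tends_toM (Fc i) IHr) => x; rewrite big_cons Pi.
by apply: eq_tends_to IHr => x; rewrite big_cons Pi.
Qed.

Lemma tends_toX f a k : tends_to f a -> tends_to (fun x => f x ^+ k) (a ^+ k).
Proof.
move=> fa; elim: k => [|k IHk].
  by rewrite expr0; apply: eq_tends_to (tends_to_cst 1) => x; rewrite expr0.
by rewrite exprS; apply: eq_tends_to (tends_toM fa IHk) => x; rewrite exprS.
Qed.

Lemma tends_to_det n (M : X -> 'M[R]_n) (B : 'M[R]_n) :
  (forall i j, tends_to (fun x => M x i j) (B i j)) ->
  tends_to (fun x => \det (M x)) (\det B).
Proof.
move=> MB; apply: tends_to_sum => s; apply: tends_toM; first exact: tends_to_cst.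
by apply: tends_to_prod => i; apply: MB.
Qed.

Lemma tends_to_meval n (p : {mpoly R[n]}) (f : X -> 'I_n -> R) (c : 'I_n -> R) :
  (forall j, tends_to (fun x => f x j) (c j)) -> tends_to (fun x => p.@[f x]) p.@[c].
Proof.
move=> fc; apply: (@eq_tends_to (fun x => \sum_(m <- msupp p) p@_m * \prod_j f x j ^+ m j)).
  by move=> x; rewrite mevalE.
rewrite mevalE; apply: tends_to_sum => m; apply: tends_toM; first exact: tends_to_cst.
by apply: tends_to_prod => j; apply: tends_toX.
Qed.

End Limits.

Section LocalInjectivity.
Variables (R : realType) (n : nat).
Variables (F : 'I_n -> ('I_n -> R) -> R) (p : 'I_n -> {mpoly R[n]}).
Hypothesis F_poly : forall i z, F i z = (p i).@[z].
Hypothesis F_multiaffine : forall i, multiaffine (F i).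

Definition near (s : 'I_n -> R) (d : R) (z : 'I_n -> R) := forall j, `|z j - s j| < d.

Let near2 s d (xy : ('I_n -> R) * ('I_n -> R)) := near s d xy.1 /\ near s d xy.2.

Let near2_mono s d d' xy : d <= d' -> near2 s d xy -> near2 s d' xy.
Proof. by move=> dd' [x1 x2]; split=> j; apply: lt_le_trans dd'; [apply: x1 | apply: x2]. Qed.

Lemma tends_to_det_secant s :
  tends_to (near2 s) (fun xy => \det (secant F xy.1 xy.2)) (\det (jacobian F s)).
Proof.
have mono := @near2_mono s.
rewrite -secant_diag; apply: tends_to_det => // i k.
have eval_lim c : tends_to (near2 s) (fun xy => (p i).@[[eta splice xy.1 xy.2 k with k |-> c]])
    (p i).@[[eta splice s s k with k |-> c]].
  apply: tends_to_meval => // j /=; case: eqP => _; first exact: tends_to_cst.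
  by move=> e e_gt0; exists e => // xy [x1 x2]; rewrite /splice; case: ifP.
rewrite mxE /partial_diff !F_poly.
apply: (eq_tends_to _ (tends_toD mono (eval_lim 1) (tends_toN (eval_lim 0)))) => xy.
by rewrite mxE /partial_diff !F_poly.
Qed.

Lemma multiaffine_locally_injective s : \det (jacobian F s) != 0 ->
  exists2 eps, 0 < eps & forall x y, near s eps x -> near s eps y ->
    (forall i, F i x = F i y) -> x = y.
Proof.
move=> det_s; have det_gt0 : 0 < `|\det (jacobian F s)| by rewrite normr_gt0.
have [eps eps_gt0 close] := tends_to_det_secant s det_gt0.
exists eps => // x y xs ys Fxy.
have secant_unit : secant F x y \in unitmx.
  rewrite unitmxE unitfE; apply: contraTneq (close (x, y) (conj xs ys)) => /= ->.
  by rewrite sub0r normrN ltxx.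
have : secant F x y *m \col_k (x k - y k) = 0.
  by rewrite secant_mul //; apply/matrixP => i j; rewrite !mxE Fxy subrr.
move/(congr1 (mulmx (invmx (secant F x y)))); rewrite mulKmx // mulmx0 => /matrixP xy0.
apply: functional_extensionality => k; apply/eqP; rewrite -subr_eq0.
by have := xy0 k ord0; rewrite !mxE => ->.
Qed.

End LocalInjectivity.

(** * The GM+I parameterization *)

Section Parameterization.
Variable K : comNzRingType.

Definition prob (a : K) (i : 'I_2) : K := if val i == 0%N then a else 1 - a.

(* phi_T, with the ingredients that do not reduce by computation ([inord],
   [insub], big operators, [forall]) as parameters: [phi] instantiates them as
   in [phiT], [phi_comp] by computable equivalents. *)
Variables (ord13 : nat -> 'I_13) (vs : ('I_4 -> 'I_2) -> 'I_2 -> 'I_2 -> 'I_6 -> 'I_2)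
  (de : 'I_5 -> 'I_6 * 'I_6) (sum2 : ('I_2 -> K) -> K) (prod5 : ('I_5 -> K) -> K).

Definition gm_with (r : 'I_6) (s : 'I_13 -> K) (lf : 'I_4 -> 'I_2) : K :=
  sum2 (fun a => sum2 (fun b =>
    prob (s (ord13 2)) (vs lf a b r) *
    prod5 (fun e => prob (s (ord13 (3 + 2 * val e + val (vs lf a b (de e).1))))
                         (vs lf a b (de e).2)))).

Variable all_equal : pred ('I_4 -> 'I_2).

Definition phi_with (r : 'I_6) (s : 'I_13 -> K) (lf : 'I_4 -> 'I_2) : K :=
  s (ord13 0) * (if all_equal lf then 1 else 0) * prob (s (ord13 1)) (lf ord0)
  + (1 - s (ord13 0)) * gm_with r s lf.

End Parameterization.

Definition gm (K : comNzRingType) (A : tree4) (r : 'I_6) :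
    ('I_13 -> K) -> ('I_4 -> 'I_2) -> K :=
  gm_with inord vstate (dir_edge A r) (fun F => \sum_a F a) (fun F => \prod_e F e) r.

Definition phi (K : comNzRingType) (A : tree4) (r : 'I_6) :
    ('I_13 -> K) -> ('I_4 -> 'I_2) -> K :=
  phi_with inord vstate (dir_edge A r) (fun F => \sum_a F a) (fun F => \prod_e F e)
    (fun lf => [forall k, lf k == lf ord0]) r.

Lemma phiTE (R : realType) A r (s : 'I_13 -> R) lf : phiT A r s lf = phi A r s lf.
Proof. by []. Qed.

Section PhiRing.
Variables (K : comNzRingType) (A : tree4) (r : 'I_6).
Implicit Types (s z : 'I_13 -> K) (lf : 'I_4 -> 'I_2).

Lemma phiE s lf : phi A r s lf =
  s (inord 0) * (if [forall k, lf k == lf ord0] then 1 else 0) * prob (s (inord 1)) (lf ord0)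
  + (1 - s (inord 0)) * gm A r s lf.
Proof. by []. Qed.

Lemma gmE s lf : gm A r s lf =
  \sum_a \sum_b (prob (s (inord 2)) (vstate lf a b r) *
    \prod_e prob (s (inord (3 + 2 * val e + val (vstate lf a b (dir_edge A r e).1))))
                 (vstate lf a b (dir_edge A r e).2)).
Proof. by []. Qed.

Lemma rmorph_prob (K' : comNzRingType) (f : {rmorphism K -> K'}) a i :
  f (prob a i) = prob (f a) i.
Proof. by rewrite /prob; case: ifP => _; rewrite ?rmorphB ?rmorph1. Qed.

Lemma rmorph_phi (K' : comNzRingType) (f : {rmorphism K -> K'}) s lf :
  f (phi A r s lf) = phi A r (f \o s) lf.
Proof.
rewrite !phiE !gmE rmorphD !rmorphM rmorphB rmorph1 !rmorph_prob rmorph_sum.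
congr (_ * _ * _ + _ * _); first by case: ifP; rewrite ?rmorph1 ?rmorph0.
apply: eq_bigr => a _; rewrite rmorph_sum; apply: eq_bigr => b _.
rewrite rmorphM rmorph_prob rmorph_prod; congr (_ * _).
by apply: eq_bigr => e _; rewrite rmorph_prob.
Qed.

Lemma affine_prob (f : K -> K) i : affine f -> affine (fun t => prob (f t) i).
Proof. by rewrite /prob; case: (val i == 0)%N => //; apply: affine1B. Qed.

Lemma constfun_prob (f : K -> K) i : constfun f -> constfun (fun t => prob (f t) i).
Proof. by rewrite /prob; case: (val i == 0)%N => //; apply: constfun1B. Qed.

Lemma affine_coord z k j : affine (fun t => [eta z with k |-> t] j).
Proof. by move=> t /=; case: eqP => _; [ring | rewrite subrr mulr0 addr0]. Qed.

Lemma constfun_coord z k j : j != k -> constfun (fun t => [eta z with k |-> t] j).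
Proof. by move=> /negbTE jk t /=; rewrite jk. Qed.

Lemma edge_index_neq_small (e : 'I_5) (st : 'I_2) (k : 'I_13) :
  (k < 3)%N -> inord (3 + 2 * e + st) != k.
Proof.
move: (ltn_ord e) (ltn_ord st) => e_lt st_lt k_lt3.
by apply: contraTneq k_lt3 => <-; rewrite inordK; lia.
Qed.

(* For k >= 3, coordinate k is a transition parameter of edge (k - 3) / 2. *)
Lemma edge_index_neq (e : 'I_5) (st : 'I_2) (k : 'I_13) :
  e != inord ((k - 3) %/ 2) -> inord (3 + 2 * e + st) != k.
Proof.
move: (ltn_ord e) (ltn_ord st) => e_lt st_lt.
apply: contraNneq => <-; apply/eqP/val_inj.
by rewrite /= !inordK; lia.
Qed.

Lemma gm_affine z k lf : affine (fun t => gm A r [eta z with k |-> t] lf).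
Proof.
rewrite /gm /gm_with.
apply: affine_sum => a; apply: affine_sum => b.
have [->|k2] := eqVneq k (inord 2).
  apply: affineMr; first by apply: affine_prob; apply: affine_coord.
  apply: constfun_prod => e; apply: constfun_prob; apply: constfun_coord.
  by apply: edge_index_neq_small; rewrite inordK.
apply: affineMl; first by apply: constfun_prob; apply: constfun_coord; rewrite eq_sym.
apply: (@affine_prod _ 'I_5 _ (inord ((k - 3) %/ 2))) => [e ek|]; last first.
  by apply: affine_prob; apply: affine_coord.
by apply: constfun_prob; apply: constfun_coord; apply: edge_index_neq.
Qed.

Lemma gm_constfun z (k : 'I_13) lf :
  (k < 2)%N -> constfun (fun t => gm A r [eta z with k |-> t] lf).
Proof.
move=> k_lt2; rewrite /gm /gm_with.
apply: constfun_sum => a; apply: constfun_sum => b; apply: constfunM.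
  by apply: constfun_prob; apply: constfun_coord; apply: contraTneq k_lt2 => <-; rewrite inordK.
apply: constfun_prod => e; apply: constfun_prob; apply: constfun_coord.
by apply: edge_index_neq_small; apply: ltn_trans k_lt2 _.
Qed.

Lemma phi_multiaffine lf : multiaffine (fun z => phi A r z lf).
Proof.
move=> z k; rewrite /phi /phi_with -/(gm A r).
have [->|k0] := eqVneq k (inord 0).
  apply: affineD; apply: affineMr.
  - by apply: affineMr; [apply: affine_coord | apply: constfun_cst].
  - apply: constfun_prob; apply: constfun_coord.
    by apply/eqP => /(congr1 (@nat_of_ord 13)); rewrite !inordK.
  - by apply: affine1B; apply: affine_coord.
  - by apply: gm_constfun; rewrite inordK.
apply: affineD; apply: affineMl.
- by apply: constfunM; [apply: constfun_coord; rewrite eq_sym | apply: constfun_cst].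
- by apply: affine_prob; apply: affine_coord.
- by apply: constfun1B; apply: constfun_coord; rewrite eq_sym.
- exact: gm_affine.
Qed.

End PhiRing.

(* Leaf patterns in binary, leaf 0 being the most significant bit: all
   patterns except 0000, 0001 and 0110. *)
Definition site_code : seq nat := [:: 2; 3; 4; 5; 7; 8; 9; 10; 11; 12; 13; 14; 15]%N.

Definition site_pattern (i : 'I_13) (k : 'I_4) : 'I_2 :=
  if odd (nth 0 site_code i %/ 2 ^ (3 - k)) then ord_max else ord0.

Definition phi_jacobian (K : comNzRingType) (A : tree4) (r : 'I_6) (z : 'I_13 -> K) :
    'M[K]_13 :=
  jacobian (fun i z => phi A r z (site_pattern i)) z.

Lemma map_phi_jacobian (K K' : comNzRingType) (f : {rmorphism K -> K'}) A r z :
  map_mx f (phi_jacobian A r z) = phi_jacobian A r (f \o z).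
Proof.
apply/matrixP => i k; rewrite !mxE /partial_diff rmorphB !rmorph_phi.
by congr (phi _ _ _ _ - phi _ _ _ _); apply: functional_extensionality => j /=; case: eqP;
  rewrite ?rmorph1 ?rmorph0.
Qed.

Lemma meval_phi (K : comNzRingType) A r (lf : 'I_4 -> 'I_2) (z : 'I_13 -> K) :
  (phi A r (fun k => 'X_k) lf).@[z] = phi A r z lf.
Proof.
rewrite rmorph_phi; congr phi.
by apply: functional_extensionality => k /=; rewrite mevalXU.
Qed.

Lemma phi_locally_injective (R : realType) A r (s : 'I_13 -> R) :
  \det (phi_jacobian A r s) != 0 -> locally_injective A r s.
Proof.
move=> det_s.
have [eps eps_gt0 inj] := multiaffine_locally_injective
  (F := fun i z => phi A r z (site_pattern i))
  (p := fun i => phi A r (fun k => 'X_k) (site_pattern i))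
  (fun i z => esym (meval_phi _ _ _ _)) (fun i => phi_multiaffine A r _) det_s.
exists eps => // s1 s2 _ _ s1_near s2_near phi12; apply: inj => // i.
have -> : site_pattern i = [ffun k => site_pattern i k] :> ('I_4 -> 'I_2).
  by apply: functional_extensionality => k; rewrite ffunE.
by rewrite -!phiTE.
Qed.

(** * A certificate modulo 7 *)

(* Unlike [insub], which is stuck on the opaque [idP], this reduces by computation. *)
Definition insub_ord m n : option 'I_m :=
  (if (n < m)%N as b return (n < m)%N = b -> option 'I_m
   then fun lt_nm => Some (Ordinal lt_nm) else fun _ => None) (erefl _).

Lemma insub_ordE m n : insub_ord m n = insub n.
Proof.
rewrite /insub_ord; move: (erefl (n < m)%N).
by case: {2 3}(n < m)%N => lt_nm; [rewrite insubT | rewrite insubF].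
Qed.

Definition inord_comp {m} n : 'I_m.+1 := odflt ord0 (insub_ord m.+1 n).

Lemma inord_compE m n : inord_comp n = inord n :> 'I_m.+1.
Proof. by rewrite /inord_comp insub_ordE. Qed.

Definition ords n : seq 'I_n := pmap (insub_ord n) (iota 0 n).

Lemma ordsE n : ords n = index_enum 'I_n.
Proof. by rewrite /ords (eq_pmap (@insub_ordE n)) /index_enum !unlock. Qed.

Lemma mem_ords n (i : 'I_n) : i \in ords n.
Proof. by rewrite ordsE mem_index_enum. Qed.

Lemma nth_ords n (i0 i : 'I_n) : nth i0 (ords n) i = i.
Proof. by rewrite ordsE /index_enum unlock -enumT nth_ord_enum. Qed.

Lemma size_ords n : size (ords n) = n.
Proof. by rewrite ordsE /index_enum unlock -enumT size_enum_ord. Qed.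

Lemma foldr_ords (T : Type) (op : T -> T -> T) idx n (F : 'I_n -> T) :
  foldr (fun i => op (F i)) idx (ords n) = \big[op/idx]_(i < n) F i.
Proof. by rewrite ordsE unlock. Qed.

Definition hub_comp (inA : pred 'I_4) (k : 'I_4) : 'I_6 :=
  if inA k then inord_comp 4 else inord_comp 5.

Definition edge_ends_comp inA (e : 'I_5) : 'I_6 * 'I_6 :=
  if insub_ord 4 (val e) is Some k then (widen_ord (isT : (4 <= 6)%N) k, hub_comp inA k)
  else (inord_comp 4, inord_comp 5).

Definition side_comp inA (v : 'I_6) : 'I_6 :=
  if insub_ord 4 (val v) is Some k then hub_comp inA k else v.

Definition dir_edge_comp inA (r : 'I_6) (e : 'I_5) : 'I_6 * 'I_6 :=
  let: (x, y) := edge_ends_comp inA e in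
  if (val e < 4)%N then (if r == x then (x, y) else (y, x))
  else (if side_comp inA r == x then (x, y) else (y, x)).

Definition vstate_comp (lf : 'I_4 -> 'I_2) (a b : 'I_2) (v : 'I_6) : 'I_2 :=
  if insub_ord 4 (val v) is Some k then lf k else if val v == 4%N then a else b.

Definition phi_comp (K : comNzRingType) (inA : pred 'I_4) (r : 'I_6) :
    ('I_13 -> K) -> ('I_4 -> 'I_2) -> K :=
  phi_with inord_comp vstate_comp (dir_edge_comp inA r)
    (fun F => foldr (fun i => +%R (F i)) 0 (ords 2))
    (fun F => foldr (fun i => *%R (F i)) 1 (ords 5))
    (fun lf => all (fun k => lf k == lf ord0) (ords 4)) r.

Lemma phi_compE (K : comNzRingType) (A : tree4) r :
  phi_comp (fun k => k \in A) r = phi A r :> (('I_13 -> K) -> _ -> K).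
Proof.
have vstateE : vstate_comp = vstate.
  by do 4![apply: functional_extensionality => ?]; rewrite /vstate_comp insub_ordE.
have dir_edgeE : dir_edge_comp (fun k => k \in A) r = dir_edge A r.
  apply: functional_extensionality => e.
  by rewrite /dir_edge_comp /edge_ends_comp /side_comp /hub_comp !insub_ordE !inord_compE.
have inordE : @inord_comp 12 = inord.
  by apply: functional_extensionality => n; rewrite inord_compE.
have all_equalE : (fun lf : 'I_4 -> 'I_2 => all (fun k => lf k == lf ord0) (ords 4)) =
                  (fun lf => [forall k, lf k == lf ord0]).
  apply: functional_extensionality => lf; apply/allP/forallP => lfE k //.
  exact: lfE (mem_ords k).
rewrite /phi_comp /phi vstateE dir_edgeE inordE all_equalE.
by congr phi_with; apply: functional_extensionality => F; rewrite foldr_ords.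
Qed.

Section ListMatrices.
Variable R : comUnitRingType.

Definition mx_list n (f : 'I_n -> 'I_n -> R) : seq (seq R) :=
  [seq [seq f i j | j <- ords n] | i <- ords n].

Definition list_mx n (M : seq (seq R)) : 'M[R]_n := \matrix_(i, j) nth 0 (nth [::] M i) j.

Lemma list_mxK n (f : 'I_n -> 'I_n -> R) : list_mx n (mx_list f) = \matrix_(i, j) f i j.
Proof.
apply/matrixP => i j; rewrite !mxE /mx_list.
by rewrite (nth_map i) ?size_ords // (nth_map j) ?size_ords // !nth_ords.
Qed.

Definition clear_column (c : nat) (u : seq R) (rows : seq (seq R)) : seq (seq R) :=
  [seq [seq x.1 - nth 0 v c * x.2 | x <- zip v u] | v <- rows].

Fixpoint gauss_jordan (cols : seq nat) (reduced rest : seq (seq R)) : seq (seq R) :=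
  if cols is c :: cols' then
    let i := find (fun v => nth 0 v c != 0) rest in
    if (i < size rest)%N then
      let v := nth [::] rest i in
      let u := [seq (nth 0 v c)^-1 * x | x <- v] in
      gauss_jordan cols' (rcons (clear_column c u reduced) u)
        (clear_column c u (take i rest ++ drop i.+1 rest))
    else gauss_jordan cols' reduced rest
  else reduced.

(* Gauss-Jordan elimination on [M | 1].  Its output is not trusted:
   [right_inverseb] checks it. *)
Definition inverse_candidate n (M : seq (seq R)) : seq (seq R) :=
  let aug := [seq x.1 ++ [seq (x.2 == j)%:R | j <- iota 0 n] | x <- zip M (iota 0 n)] in
  [seq drop n v | v <- gauss_jordan (iota 0 n) [::] aug].

Definition right_inverseb n (M N : seq (seq R)) : bool :=
  all (fun i : 'I_n => all (fun j : 'I_n =>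
    foldr (fun k : 'I_n => +%R (nth 0 (nth [::] M i) k * nth 0 (nth [::] N k) j)) 0 (ords n)
      == (i == j)%:R) (ords n)) (ords n).

Lemma right_inverseb_unit n (M N : seq (seq R)) :
  right_inverseb n M N -> list_mx n M \in unitmx.
Proof.
move=> /allP MN; suff /mulmx1_unit[] : list_mx n M *m list_mx n N = 1%:M by [].
apply/matrixP => i j; rewrite !mxE.
have /allP/(_ j (mem_ords j))/eqP <- := MN i (mem_ords i).
by rewrite foldr_ords; apply: eq_bigr => k _; rewrite !mxE.
Qed.
End ListMatrices.

Definition cert_point (k : 'I_13) : int :=
  (nth 0 [:: 4; 3; 5; 5; 4; 3; 6; 2; 3; 5; 0; 2; 4] k)%N%:Z.

Definition certified (inA : pred 'I_4) (r : 'I_6) : bool :=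
  let z := [seq (cert_point j)%:~R : 'Z_7 | j <- ords 13] in
  let J := mx_list (fun i k =>
    partial_diff (fun s => phi_comp inA r s (site_pattern i)) (fun j => nth 0 z j) k) in
  right_inverseb 13 J (inverse_candidate 13 J).

Lemma all_certified :
  all (fun x : 'I_4 => all (fun y : 'I_4 => (x < y)%N ==>
    all (certified (fun k => (k == x) || (k == y))) (ords 6)) (ords 4)) (ords 4).
Proof. by vm_compute. Qed.

Lemma det_phi_jacobian_Z7 (A : tree4) r :
  is_binary_tree4 A -> \det (phi_jacobian A r (intr \o cert_point : _ -> 'Z_7)) != 0.
Proof.
move/eqP/cards2P => [x [y [xy ->]]].
wlog lt_xy : x y xy / (x < y)%N.
  move=> gen; case: (ltngtP x y) => [|lt_yx|/val_inj eq_xy]; first exact: gen.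
    by rewrite setUC; apply: gen; rewrite // eq_sym.
  by rewrite eq_xy eqxx in xy.
have := all_certified => /allP/(_ x (mem_ords x))/allP/(_ y (mem_ords y)).
move=> /implyP/(_ lt_xy)/allP/(_ r (mem_ords r)).
rewrite /certified => /right_inverseb_unit; rewrite list_mxK unitmxE.
have -> : (fun k : 'I_4 => (k == x) || (k == y)) = (fun k => k \in [set x; y]).
  by apply: functional_extensionality => k; rewrite !inE.
have -> : (fun j : 'I_13 => nth 0 [seq (cert_point j)%:~R : 'Z_7 | j <- ords 13] j) =
          intr \o cert_point.
  by apply: functional_extensionality => j; rewrite (nth_map j) ?size_ords // nth_ords.
by rewrite phi_compE; apply: contraTneq => ->; rewrite unitr0.
Qed.

Lemma det_phi_jacobian_cert (K : numDomainType) (A : tree4) r :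
  is_binary_tree4 A -> \det (phi_jacobian A r (intr \o cert_point : _ -> K)) != 0.
Proof.
move=> binA; rewrite -map_phi_jacobian det_map_mx intr_eq0.
apply: contra (det_phi_jacobian_Z7 r binA) => /eqP det0.
by rewrite -map_phi_jacobian det_map_mx det0 rmorph0.
Qed.

Theorem corollary8 (R : realType) (A : tree4) (r : 'I_6) :
  is_binary_tree4 A ->
  exists Y : ('I_13 -> R[i]) -> Prop,
    proper_variety Y /\
    forall s : 'I_13 -> R,
      stoch_params s -> ~ Y (realC s) -> locally_injective A r s.
Proof.
move=> binA.
pose D : {mpoly R[i][13]} := \det (phi_jacobian A r (fun k => 'X_k)).
have evalD z : D.@[z] = \det (phi_jacobian A r z).
  rewrite -det_map_mx map_phi_jacobian; congr (\det (phi_jacobian A r _)).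
  by apply: functional_extensionality => k /=; rewrite mevalXU.
exists (fun z => D.@[z] = 0); split.
  split; first by exists (fun f => f = D) => z; split => [Dz f -> | /(_ D erefl)].
  by exists (intr \o cert_point); rewrite evalD; apply/eqP; apply: det_phi_jacobian_cert.
move=> s _ Ds; apply: phi_locally_injective; apply: contra_notN Ds => /eqP det0.
by rewrite evalD -[realC s]/(real_complex R \o s) -map_phi_jacobian det_map_mx det0 rmorph0.
Qed.
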